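(* Let $G$ and $K$ be finite sets, let $\beta:G\rightarrow K$ be a surjective function, let $U\subseteq\Lambda^G$ be such that $\Xi_\beta(U)=\Lambda^K$, and let $f^*:K\rightarrow\mathbb R^+$. Then for every $p\in U$ and every $\epsilon>0$ there exists $\delta'>0$ such that for every $\delta\ge 0$ with $\delta<\delta'$ and every function $f:G\rightarrow\mathbb R^+$ whose thematic mean divergence with respect to $f^*$ on $U$ under $\beta$ is bounded by $\delta$, we have \[d(\Xi_\beta(\mathcal S_f p),\,\mathcal S_{f^*}(\Xi_\beta p))<\epsilon.\]
   Context: $\mathbb R^+$ denotes the positive reals. For a set $X$, $\Lambda^X$ is the set of functions $p:X\rightarrow[0,1]$ with $\sum_{x\in X}p(x)=1$. For $\beta:G\rightarrow K$ and $k\in K$, $\langle k\rangle_\beta=\{x\in G\mid \beta(x)=k\}$, and $\Xi_\beta:\Lambda^G\rightarrow\Lambda^K$ is $(\Xi_\beta p)(k)=\sum_{x\in\langle k\rangle_\beta}p(x)$; $\Xi_\beta(U)=\{\Xi_\beta p\mid p\in U\}$. For a finite set $X$ and $f:X\rightarrow\mathbb R^+$, $\mathcal E_f(p)=\sum_{x\in X}f(x)p(x)$ (defined also for the zero function $p$), and the selection operator $\mathcal S_f:\Lambda^X\rightarrow\Lambda^X$ is $(\mathcal S_fp)(x)=f(x)p(x)/\mathcal E_f(p)$. The theme conditional operator gives, for $p\in\Lambda^G$ and $k\in K$, the function $\mathcal C_\beta(p,k):G\rightarrow[0,1]$ with $(\mathcal C_\beta(p,k))(x)=p(x)/(\Xi_\beta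 p)(k)$ if $\beta(x)=k$ and $(\Xi_\beta p)(k)>0$, and $(\mathcal C_\beta(p,k))(x)=0$ otherwise. For $\delta\ge0$, the thematic mean divergence of $f:G\rightarrow\mathbb R^+$ with respect to $f^*:K\rightarrow\mathbb R^+$ on $U$ under $\beta$ is bounded by $\delta$ if for all $p\in U$ and all $k\in K$, $|\mathcal E_f(\mathcal C_\beta(p,k))-f^*(k)|\le\delta$. For real-valued functions $g,h$ on a finite set $X$, $d(g,h)=\sum_{x\in X}|g(x)-h(x)|$. *)

From mathcomp Require Import all_boot all_order all_algebra.
From mathcomp Require Import reals.
Set Implicit Arguments. Unset Strict Implicit. Unset Printing Implicit Defensive.
Import Order.TTheory GRing.Theory Num.Theory.
Local Open Scope ring_scope.

Section Defs.
Variable R : realType.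

Definition Lambda (X : finType) (p : X -> R) : Prop :=
  (forall x, 0 <= p x <= 1) /\ \sum_(x : X) p x = 1.

Definition Xi (G K : finType) (beta : G -> K) (p : G -> R) : K -> R :=
  fun k => \sum_(x : G | beta x == k) p x.

Definition Ef (X : finType) (f : X -> R) (p : X -> R) : R :=
  \sum_(x : X) f x * p x.

Definition Sel (X : finType) (f : X -> R) (p : X -> R) : X -> R :=
  fun x => f x * p x / Ef f p.

Definition Cond (G K : finType) (beta : G -> K) (p : G -> R) (k : K) : G -> R :=
  fun x => if (beta x == k) && (0 < Xi beta p k) then p x / Xi beta p k else 0.

Definition tmd_bounded (G K : finType) (beta : G -> K) (f : G -> R)
  (fstar : K -> R) (U : (G -> R) -> Prop) (delta : R) : Prop :=
  forall p, U p -> forall k : K, `|Ef f (Cond beta p k) - fstar k| <= delta.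

Definition dist (X : finType) (g h : X -> R) : R := \sum_(x : X) `|g x - h x|.

End Defs.

(* Write a := Xi_beta (f p) and b := f^* Xi_beta p, so that Xi_beta (S_f p) and
   S_{f^*} (Xi_beta p) are the normalisations of a and b.  On each fibre k with
   Xi_beta p k > 0, a k / Xi_beta p k is the conditional mean E_f(C_beta(p,k)),
   so the divergence bound for the single distribution p gives
   |a k - b k| <= delta Xi_beta p k, hence d(a, b) <= delta.  Normalising costs
   at most a factor 2 / sum a, and sum a >= sum b - delta, so the distance is at
   most 2 delta / (E_{f^*}(Xi_beta p) - delta). *)

From mathcomp Require Import all_boot all_order all_algebra.
From mathcomp Require Import reals.
From mathcomp Require Import ring lra.
Import Order.TTheory GRing.Theory Num.Theory.
Set Implicit Arguments.
Unset Strict Implicit.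
Unset Printing Implicit Defensive.
Local Open Scope ring_scope.

Section Distributions.
Variables (R : realType) (X : finType).
Implicit Types (a b f p : X -> R).

Definition normalize a : X -> R := fun x => a x / \sum_(y : X) a y.

Lemma Sel_normalize f p : Sel f p = normalize (f \* p).
Proof. by []. Qed.

Lemma Ef_gt0 f p : (forall x, 0 < f x) -> Lambda p -> 0 < Ef f p.
Proof.
move=> f_gt0 [p01 p1].
have fp_ge0 x : 0 <= f x * p x.
  by apply: mulr_ge0; [exact: ltW | case/andP: (p01 x)].
rewrite lt_def sumr_ge0 ?andbT //; apply/eqP => /psumr_eq0P fp0.
suff: \sum_(x : X) p x = 0 by rewrite p1 => /eqP; rewrite oner_eq0.
apply: big1 => x _; apply/eqP.
by have /eqP := fp0 (fun x _ => fp_ge0 x) x isT; rewrite mulf_eq0 gt_eqF.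
Qed.

Lemma norm_sum_sub_le_dist a b : `|\sum_x a x - \sum_x b x| <= dist a b.
Proof. by rewrite -sumrB; apply: ler_norm_sum. Qed.

Lemma dist_normalize_le a b :
  0 < \sum_x a x -> 0 < \sum_x b x -> (forall x, 0 <= b x) ->
  dist (normalize a) (normalize b) <= 2 * dist a b / \sum_x a x.
Proof.
set A := \sum_x a x; set B := \sum_x b x => A_gt0 B_gt0 b_ge0.
have termwise x :
    `|a x / A - b x / B| <= `|a x - b x| / A + b x * (`|B - A| / (A * B)).
  have -> : a x / A - b x / B = (a x - b x) / A + b x * ((B - A) / (A * B)).
    by field; rewrite !gt_eqF.
  apply: le_trans (ler_normD _ _) _.
  rewrite !(normrM, normfV) (gtr0_norm A_gt0) (gtr0_norm B_gt0).
  by rewrite (ger0_norm (b_ge0 x)).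
apply: le_trans (ler_sum _ (fun x _ => termwise x)) _.
rewrite big_split /= -!mulr_suml -/B.
have -> : B * (`|B - A| / (A * B)) = `|B - A| / A by field; rewrite !gt_eqF.
rewrite -mulrDl ler_pM2r ?invr_gt0 // distrC.
have := norm_sum_sub_le_dist a b; rewrite -/A -/B /dist; lra.
Qed.

Lemma eq_dist (g g' h h' : X -> R) :
  g =1 g' -> h =1 h' -> dist g h = dist g' h'.
Proof. by move=> eq_g eq_h; apply: eq_bigr => x _; rewrite eq_g eq_h. Qed.

End Distributions.

Section Pushforward.
Variables (R : realType) (G K : finType) (beta : G -> K).
Implicit Types (a f p : G -> R).

Lemma Xi_sum p : \sum_(k : K) Xi beta p k = \sum_(x : G) p x.
Proof. by rewrite [RHS](partition_big beta xpredT). Qed.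

Lemma Xi_ge0 p : (forall x, 0 <= p x) -> forall k, 0 <= Xi beta p k.
Proof. by move=> p_ge0 k; apply: sumr_ge0. Qed.

Lemma Lambda_Xi p : Lambda p -> Lambda (Xi beta p).
Proof.
move=> [p01 p1]; have p_ge0 x : 0 <= p x by case/andP: (p01 x).
have q1 : \sum_k Xi beta p k = 1 by rewrite Xi_sum.
split=> // k; rewrite Xi_ge0 //= -q1 (bigD1 k) //= lerDl.
by apply: sumr_ge0 => j _; apply: Xi_ge0.
Qed.

Lemma Xi_normalize a : Xi beta (normalize a) =1 normalize (Xi beta a).
Proof. by move=> k; rewrite /Xi /normalize -mulr_suml Xi_sum. Qed.

Lemma Ef_Cond f p k :
  0 < Xi beta p k -> Ef f (Cond beta p k) = Xi beta (f \* p) k / Xi beta p k.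
Proof.
move=> q_gt0; rewrite /Ef /Cond /Xi mulr_suml (bigID (fun x => beta x == k)) /=.
rewrite [X in _ + X]big1 => [|x /negbTE ->]; last by rewrite mulr0.
by rewrite addr0; apply: eq_bigr => x ->; rewrite q_gt0 mulrA.
Qed.

Lemma norm_Xi_mul_sub_le f p k (c delta : R) : (forall x, 0 <= p x) ->
  `|Ef f (Cond beta p k) - c| <= delta ->
  `|Xi beta (f \* p) k - c * Xi beta p k| <= delta * Xi beta p k.
Proof.
move=> p_ge0; have [q0|q_gt0] := eqVneq (Xi beta p k) 0.
  have fiber0 x : beta x == k -> p x = 0.
    by move=> bx; apply: (psumr_eq0P (fun y _ => p_ge0 y) q0).
  have -> : Xi beta (f \* p) k = 0.
    by apply: big1 => x /fiber0 px0; rewrite /= px0 mulr0.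
  by rewrite q0 !mulr0 subr0 normr0.
have {}q_gt0 : 0 < Xi beta p k by rewrite lt_def q_gt0 Xi_ge0.
rewrite Ef_Cond // => dev.
have -> : Xi beta (f \* p) k - c * Xi beta p k
        = (Xi beta (f \* p) k / Xi beta p k - c) * Xi beta p k.
  by field; rewrite gt_eqF.
by rewrite normrM (gtr0_norm q_gt0) ler_pM2r.
Qed.

Lemma dist_Xi_mul_le f p (c : K -> R) (delta : R) : Lambda p ->
  (forall k, `|Ef f (Cond beta p k) - c k| <= delta) ->
  dist (Xi beta (f \* p)) (c \* Xi beta p) <= delta.
Proof.
move=> [p01 p1] dev; have p_ge0 x : 0 <= p x by case/andP: (p01 x).
apply: le_trans (ler_sum _ (fun k _ => norm_Xi_mul_sub_le p_ge0 (dev k))) _.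
by rewrite -mulr_sumr Xi_sum p1 mulr1.
Qed.

End Pushforward.

Theorem theorem2 (R : realType) (G K : finType) (beta : G -> K)
  (U : (G -> R) -> Prop) (fstar : K -> R) :
  (forall k : K, exists x : G, beta x = k) ->
  (forall p, U p -> Lambda p) ->
  (forall q : K -> R, Lambda q <-> exists2 p, U p & Xi beta p = q) ->
  (forall k, 0 < fstar k) ->
  forall p, U p -> forall eps : R, 0 < eps ->
  exists2 delta' : R, 0 < delta' &
    forall delta : R, 0 <= delta -> delta < delta' ->
    forall f : G -> R, (forall x, 0 < f x) ->
      tmd_bounded beta f fstar U delta ->
      dist (Xi beta (Sel f p)) (Sel fstar (Xi beta p)) < eps.
Proof.
move=> _ U_Lambda _ fstar_gt0 p Up eps eps_gt0.
have p_Lambda := U_Lambda p Up.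
have p_ge0 x : 0 <= p x by case: p_Lambda => /(_ x)/andP[].
have m_gt0 : 0 < Ef fstar (Xi beta p) := Ef_gt0 fstar_gt0 (Lambda_Xi beta p_Lambda).
set m := Ef fstar (Xi beta p) in m_gt0 *.
(* the largest delta' with 2 delta / (m - delta) < eps for all delta < delta' *)
exists (eps * m / (2 + eps)); first by rewrite divr_gt0 ?mulr_gt0 ?addr_gt0.
move=> delta _ delta_lt f f_gt0 tmd.
have dev := dist_Xi_mul_le p_Lambda (tmd p Up).
have Efp_gt0 : 0 < Ef f p := Ef_gt0 f_gt0 p_Lambda.
have sum_Xi_fp : \sum_k Xi beta (f \* p) k = Ef f p by rewrite Xi_sum.
have sum_fstar_Xi : \sum_k (fstar \* Xi beta p) k = m by [].
have Efp_ge : m - delta <= Ef f p.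
  have := le_trans (norm_sum_sub_le_dist _ _) dev.
  by rewrite sum_Xi_fp sum_fstar_Xi ler_distl => /andP[].
rewrite !Sel_normalize (eq_dist (Xi_normalize beta (f \* p)) (frefl _)).
apply: le_lt_trans (dist_normalize_le _ _ _) _; rewrite ?sum_Xi_fp //.
  by move=> k; apply: mulr_ge0; [exact: ltW | exact: Xi_ge0].
rewrite ltr_pdivrMr //.
have := ler_wpM2l (ltW eps_gt0) Efp_ge.
rewrite ltr_pdivlMr ?addr_gt0 // in delta_lt.
lra.
Qed.
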